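(* Let $\alpha\in\mathbb R$. For every $u_0>0$ there exist $R>0$ and $u\in C^2([0,R])$ solving $$\left(\frac{r\,u'(r)}{\sqrt{1+u'(r)^2}}\right)'=\alpha\,\frac{r\,(u-ru')}{(r^2+u^2)\sqrt{1+u'^2}}\quad\text{in }(0,R),\qquad u(0)=u_0,\quad u'(0)=0.$$ Moreover, the solution depends continuously on the parameters $\alpha$ and $u_0$.
   Context: This ODE is the equation for the profile $z=u(r)$, $r=\sqrt{x^2+y^2}$, of a surface of revolution about the $z$-axis satisfying $H=\alpha\langle\nu,p\rangle/|p|^2$ (with $H$ the sum of principal curvatures), meeting the rotation axis orthogonally at $(0,0,u_0)$. *)

From Stdlib Require Import Reals.
From Coquelicot Require Import Coquelicot.
Open Scope R_scope.

(* g is the derivative of f on the closed interval [a,b], where at every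
   point x of [a,b] the difference quotient is taken with y ranging over
   [a,b] \ {x} (so one-sided derivatives at the endpoints). *)
Definition has_deriv_on_closed (a b : R) (f g : R -> R) : Prop :=
  forall x, a <= x <= b ->
    filterlim (fun y => (f y - f x) / (y - x))
      (within (fun y => a <= y <= b /\ y <> x) (locally x))
      (locally (g x)).

Definition continuous_on_closed (a b : R) (f : R -> R) : Prop :=
  forall x, a <= x <= b ->
    filterlim f (within (fun y => a <= y <= b) (locally x)) (locally (f x)).

Definition C2_on (a b : R) (u u1 u2 : R -> R) : Prop :=
  has_deriv_on_closed a b u u1 /\ has_deriv_on_closed a b u1 u2 /\
  continuous_on_closed a b u2.

Definition rhs (alpha r ur u1r : R) : R :=
  alpha * (r * (ur - r * u1r)) / ((r ^ 2 + ur ^ 2) * sqrt (1 + u1r ^ 2)).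

Definition solves_ode (alpha Rr : R) (u u1 : R -> R) : Prop :=
  forall r, 0 < r < Rr ->
    is_derive (fun s => s * u1 s / sqrt (1 + u1 s ^ 2)) r
      (rhs alpha r (u r) (u1 r)).

Definition jointly_continuous_on (P : R -> R -> Prop) (Rr : R)
    (F : R -> R -> R -> R) : Prop :=
  forall a c r, P a c -> 0 <= r <= Rr ->
  forall eps, 0 < eps -> exists delta, 0 < delta /\
    forall a' c' r', P a' c' -> 0 <= r' <= Rr ->
      Rabs (a' - a) < delta -> Rabs (c' - c) < delta -> Rabs (r' - r) < delta ->
      Rabs (F a' c' r' - F a c r) < eps.

From Stdlib Require Import Reals Lra Lia Psatz.
From Coquelicot Require Import Coquelicot.
Open Scope R_scope.

(* In the sine [w = u' / sqrt (1 + u' ^ 2)] of the inclination angle the equation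
   becomes [u' = w / sqrt (1 - w ^ 2)], [(r w)' = r h] with [h = alpha <nu,p> / |p|^2],
   and the conditions at the axis turn it into the integral equations
   [u r = u0 + int_0^r u'] and [w r = 1/r int_0^r s h ds]. Averaging over [0, r]
   does not increase sup norms, so on a short interval the Picard map is a sup-norm
   contraction of ratio 1/2 on continuous pairs with [u] near [u0] and [|w| <= 1/2],
   uniformly for parameters near [(alpha0, u00)], and it is Lipschitz in the
   parameters: its fixed point exists and depends continuously on them. Near the
   axis [w r / r = 1/r^2 int_0^r s h ds -> h 0 / 2], which gives [w' 0] and the
   continuity of [u''] at [0]. *)

(** * Real-analysis preliminaries *)

Lemma ex_pow_half_lt (K eps : R) : 0 < eps -> exists n, K * (/2) ^ n < eps.
Proof.
  intros Heps. destruct (Rle_or_lt K 0) as [HK|HK].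
  { exists 0%nat. simpl. lra. }
  destruct (pow_lt_1_zero (/2) ltac:(rewrite Rabs_pos_eq; lra) (eps / K))
    as [N HN]; [apply Rdiv_lt_0_compat; lra|].
  exists N. specialize (HN N (le_n _)).
  rewrite Rabs_pos_eq in HN by (apply pow_le; lra).
  apply Rmult_lt_compat_l with (r := K) in HN; [|lra].
  replace (K * (eps / K)) with eps in HN by (field; lra). exact HN.
Qed.

Lemma Rle_0_of_pow_half_bound (a K : R) : (forall n, a <= K * (/2) ^ n) -> a <= 0.
Proof.
  intros H. destruct (Rle_or_lt a 0) as [Ha|Ha]; [exact Ha|].
  destruct (ex_pow_half_lt K a Ha) as [n Hn]. specialize (H n). lra.
Qed.

Lemma continuity_pt_eps (f : R -> R) (x : R) :
  continuity_pt f x <->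
  forall eps, 0 < eps -> exists d, 0 < d /\
    forall y, Rabs (y - x) < d -> Rabs (f y - f x) < eps.
Proof.
  split.
  - intros Hc eps Heps. destruct (Hc eps Heps) as [d [Hd H]].
    exists d; split; [lra|]. intros y Hy.
    destruct (Req_dec y x) as [->|Hne].
    + rewrite Rminus_diag, Rabs_R0; lra.
    + apply (H y). split; [split; [exact I|auto]|exact Hy].
  - intros H eps Heps. destruct (H eps Heps) as [d [Hd H']].
    exists d; split; [lra|]. intros y [_ Hy]. apply H'. exact Hy.
Qed.

Lemma filterlim_within_eps (D : R -> Prop) (f : R -> R) (x l : R) :
  (forall eps, 0 < eps -> exists d, 0 < d /\
     forall y, D y -> Rabs (y - x) < d -> Rabs (f y - l) < eps) ->
  filterlim f (within D (locally x)) (locally l).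
Proof.
  intros H. apply filterlim_locally. intros [eps Heps]. simpl.
  destruct (H eps Heps) as [d [Hd H']].
  exists (mkposreal d Hd). intros y Hy Dy. apply H'; auto.
Qed.

Lemma filterlim_within_ext (D : R -> Prop) (x l : R) (f g : R -> R) :
  (forall y, D y -> f y = g y) ->
  filterlim f (within D (locally x)) (locally l) ->
  filterlim g (within D (locally x)) (locally l).
Proof.
  intros He. apply filterlim_ext_loc.
  exists (mkposreal 1 Rlt_0_1). intros y _ Dy. apply He; auto.
Qed.

Lemma filterlim_within_mult (D : R -> Prop) (x l1 l2 : R) (f g : R -> R) :
  filterlim f (within D (locally x)) (locally l1) ->
  filterlim g (within D (locally x)) (locally l2) ->
  filterlim (fun y => f y * g y) (within D (locally x)) (locally (l1 * l2)).
Proof.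
  intros Hf Hg. apply (filterlim_comp_2 f g Rmult Hf Hg).
  apply (@filterlim_mult R_AbsRing l1 l2).
Qed.

Lemma continuity_pt_within (D : R -> Prop) (f : R -> R) (x : R) :
  continuity_pt f x -> filterlim f (within D (locally x)) (locally (f x)).
Proof.
  intros Hc. apply filterlim_within_eps. intros eps Heps.
  destruct (proj1 (continuity_pt_eps f x) Hc eps Heps) as [d [Hd H]].
  exists d; split; auto.
Qed.

Lemma is_derive_within (D : R -> Prop) (f : R -> R) (x l : R) :
  is_derive f x l ->
  filterlim (fun y => (f y - f x) / (y - x))
    (within (fun y => D y /\ y <> x) (locally x)) (locally l).
Proof.
  intros Hd. apply filterlim_within_eps. intros eps Heps.
  apply is_derive_Reals in Hd. destruct (Hd eps Heps) as [d H].
  exists d; split; [apply cond_pos|]. intros y [_ Hne] Hy.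
  specialize (H (y - x) ltac:(lra) Hy). rewrite (Rplus_minus x y) in H. exact H.
Qed.

Lemma locally_interior (a b x : R) : a < x < b -> locally x (fun y => a <= y <= b).
Proof.
  intros Hx. exists (mkposreal (Rmin (x - a) (b - x)) ltac:(apply Rmin_pos; lra)).
  intros y Hy. change (Rabs (y - x) < Rmin (x - a) (b - x)) in Hy. apply Rabs_def2 in Hy.
  pose proof (Rmin_l (x - a) (b - x)). pose proof (Rmin_r (x - a) (b - x)). lra.
Qed.

Lemma between_of_pow_half_approx (x : nat -> R) (y lo hi K : R) :
  (forall n, lo <= x n <= hi) -> (forall n, Rabs (x n - y) <= K * (/2) ^ n) -> lo <= y <= hi.
Proof.
  intros Hx Hxy. split.
  - assert (lo - y <= 0); [|lra]. apply (Rle_0_of_pow_half_bound _ K). intros n.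
    specialize (Hx n). specialize (Hxy n). unfold Rabs in Hxy; destruct Rcase_abs in Hxy; lra.
  - assert (y - hi <= 0); [|lra]. apply (Rle_0_of_pow_half_bound _ K). intros n.
    specialize (Hx n). specialize (Hxy n). unfold Rabs in Hxy; destruct Rcase_abs in Hxy; lra.
Qed.

Section PointwiseContinuity.
Variables (f g : R -> R) (x : R).
Hypotheses (Hf : continuity_pt f x) (Hg : continuity_pt g x).

Lemma cont_plus : continuity_pt (fun y => f y + g y) x.
Proof. exact (continuity_pt_plus f g x Hf Hg). Qed.

Lemma cont_minus : continuity_pt (fun y => f y - g y) x.
Proof. exact (continuity_pt_minus f g x Hf Hg). Qed.

Lemma cont_mult : continuity_pt (fun y => f y * g y) x.
Proof. exact (continuity_pt_mult f g x Hf Hg). Qed.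

Lemma cont_inv : f x <> 0 -> continuity_pt (fun y => / f y) x.
Proof. exact (continuity_pt_inv f x Hf). Qed.

Lemma cont_div : g x <> 0 -> continuity_pt (fun y => f y / g y) x.
Proof. exact (continuity_pt_div f g x Hf Hg). Qed.

Lemma cont_pow (n : nat) : continuity_pt (fun y => f y ^ n) x.
Proof.
  induction n as [|n IH]; simpl.
  - apply continuity_pt_const. intros ? ?; reflexivity.
  - exact (continuity_pt_mult f _ x Hf IH).
Qed.

Lemma cont_sqrt : 0 < f x -> continuity_pt (fun y => sqrt (f y)) x.
Proof. intros. apply (continuity_pt_comp f sqrt x Hf). apply continuity_pt_sqrt; lra. Qed.

End PointwiseContinuity.

Lemma cont_const (c x : R) : continuity_pt (fun _ => c) x.
Proof. apply continuity_pt_const. intros ? ?; reflexivity. Qed.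

Section Integrals.
Variable f : R -> R.
Hypothesis Hf : forall s, continuity_pt f s.

Lemma ex_RInt_cont (a b : R) : ex_RInt f a b.
Proof.
  apply (@ex_RInt_continuous R_CompleteNormedModule).
  intros z _. apply continuity_pt_filterlim, Hf.
Qed.

Lemma abs_RInt_0_le (c M : R) : 0 <= c ->
  (forall s, 0 <= s <= c -> Rabs (f s) <= M) -> Rabs (RInt f 0 c) <= c * M.
Proof.
  intros Hc HM. replace c with (c - 0) at 2 by ring.
  apply abs_RInt_le_const; auto. apply ex_RInt_cont.
Qed.

Lemma abs_average_le (c M : R) : 0 <= c ->
  (forall s, 0 <= s <= c -> Rabs (f s) <= M) -> Rabs (/ c * RInt f 0 c) <= M.
Proof.
  intros Hc HM. destruct (Req_dec c 0) as [->|Hne].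
  - rewrite Rinv_0, Rmult_0_l, Rabs_R0.
    specialize (HM 0 ltac:(lra)). pose proof (Rabs_pos (f 0)). lra.
  - rewrite Rabs_mult, Rabs_inv, (Rabs_pos_eq c) by lra.
    pose proof (abs_RInt_0_le c M Hc HM).
    apply Rmult_le_reg_l with c; [lra|]. rewrite <- Rmult_assoc, Rinv_r by lra. lra.
Qed.

Lemma is_derive_RInt_0 (x : R) : is_derive (fun y => RInt f 0 y) x (f x).
Proof.
  apply (is_derive_RInt f _ 0 x).
  - exists (mkposreal 1 Rlt_0_1). intros y _.
    apply (@RInt_correct R_CompleteNormedModule), ex_RInt_cont.
  - apply continuity_pt_filterlim, Hf.
Qed.

Lemma continuity_pt_RInt_0 (x : R) : continuity_pt (fun y => RInt f 0 y) x.
Proof.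
  apply derivable_continuous_pt. exists (f x).
  apply is_derive_Reals, is_derive_RInt_0.
Qed.

End Integrals.

Lemma RInt_minus_cont (f g : R -> R) (a b : R) :
  (forall s, continuity_pt f s) -> (forall s, continuity_pt g s) ->
  RInt (fun s => f s - g s) a b = RInt f a b - RInt g a b.
Proof. intros Hf Hg. apply (RInt_minus f g a b); apply ex_RInt_cont; auto. Qed.

Lemma RInt_0_mult_id (c y : R) : RInt (fun s => s * c) 0 y = c * y ^ 2 / 2.
Proof.
  assert (H : is_RInt (fun s => s * c) 0 y (minus (c * y ^ 2 / 2) (c * 0 ^ 2 / 2))).
  { apply (@is_RInt_derive R_CompleteNormedModule (fun s => c * s ^ 2 / 2)).
    - intros x _. auto_derive; auto. field.
    - intros x _. apply continuity_pt_filterlim, cont_mult;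
        [apply continuity_pt_id|apply cont_const]. }
  apply (@is_RInt_unique R_CompleteNormedModule) in H. rewrite H.
  unfold minus, plus, opp. simpl. field.
Qed.

Section Moments.
Variable h : R -> R.
Hypothesis Hh : forall s, continuity_pt h s.

Let moment_cont : forall s, continuity_pt (fun t => t * h t) s.
Proof. intros s. apply cont_mult; [apply continuity_pt_id|apply Hh]. Qed.

Lemma RInt_moment_quotient (eps : R) : 0 < eps -> exists d, 0 < d /\
  forall y, 0 < y < d -> Rabs (RInt (fun s => s * h s) 0 y / y ^ 2 - h 0 / 2) <= eps.
Proof.
  intros He. destruct (proj1 (continuity_pt_eps h 0) (Hh 0) eps He) as [d [Hd H]].
  exists d. split; auto. intros y Hy.
  assert (Hsq : 0 < y ^ 2) by (apply pow_lt; lra).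
  assert (Hlin : forall s, continuity_pt (fun t => t * h 0) s).
  { intros s. apply cont_mult; [apply continuity_pt_id|apply cont_const]. }
  assert (B : Rabs (RInt (fun s => s * h s) 0 y - h 0 * y ^ 2 / 2) <= y * (y * eps)).
  { rewrite <- RInt_0_mult_id, <- RInt_minus_cont by (apply moment_cont || apply Hlin).
    apply abs_RInt_0_le; [intros s; apply cont_minus; [apply moment_cont|apply Hlin]|lra|].
    intros s Hs. rewrite <- Rmult_minus_distr_l, Rabs_mult, Rabs_pos_eq by lra.
    apply Rmult_le_compat; try lra; [apply Rabs_pos|].
    left. apply H. rewrite Rminus_0_r, Rabs_pos_eq; lra. }
  replace (RInt (fun s => s * h s) 0 y / y ^ 2 - h 0 / 2)
    with ((RInt (fun s => s * h s) 0 y - h 0 * y ^ 2 / 2) / y ^ 2) by (field; lra).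
  unfold Rdiv. rewrite Rabs_mult, (Rabs_pos_eq (/ y ^ 2)) by (left; apply Rinv_0_lt_compat; lra).
  apply Rmult_le_reg_r with (y ^ 2); [lra|].
  rewrite Rmult_assoc, Rinv_l by lra. nra.
Qed.

End Moments.

Lemma is_derive_average (g : R -> R) (x : R) : (forall s, continuity_pt g s) -> x <> 0 ->
  is_derive (fun y => / y * RInt g 0 y) x (g x / x - RInt g 0 x / x ^ 2).
Proof.
  intros Hg Hx.
  assert (Dinv : is_derive (fun y : R => / y) x (- 1 / x ^ 2)) by (auto_derive; [auto|field; auto]).
  pose proof (is_derive_mult _ _ x _ _ Dinv (is_derive_RInt_0 g Hg x) Rmult_comm) as D.
  eapply is_derive_ext; [intros t; reflexivity|].
  replace (g x / x - RInt g 0 x / x ^ 2)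
    with (plus (mult (-1 / x ^ 2) (RInt g 0 x)) (mult (/ x) (g x))); [exact D|].
  unfold plus, mult; simpl. field. auto.
Qed.

Lemma continuity_pt_uniform_limit (f : nat -> R -> R) (g : R -> R) (K x : R) :
  (forall n, continuity_pt (f n) x) ->
  (forall n y, Rabs (f n y - g y) <= K * (/2) ^ n) -> continuity_pt g x.
Proof.
  intros Hc Hu. apply continuity_pt_eps. intros eps He.
  destruct (ex_pow_half_lt K (eps / 3) ltac:(lra)) as [n Hn].
  destruct (proj1 (continuity_pt_eps (f n) x) (Hc n) (eps / 3) ltac:(lra)) as [d [Hd H]].
  exists d; split; auto. intros y Hy. specialize (H y Hy).
  pose proof (Hu n y). pose proof (Hu n x).
  replace (g y - g x) with ((g y - f n y) + (f n y - f n x) + (f n x - g x)) by ring.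
  eapply Rle_lt_trans; [apply Rabs_triang|].
  eapply Rle_lt_trans; [apply Rplus_le_compat_r, Rabs_triang|].
  rewrite (Rabs_minus_sym (g y)). lra.
Qed.

Lemma Lim_seq_pow_half_err (x : nat -> R) (C : R) :
  (forall n m, Rabs (x (n + m)%nat - x n) <= C * (/2) ^ n) ->
  forall n, Rabs (x n - real (Lim_seq x)) <= C * (/2) ^ n.
Proof.
  intros Hc.
  assert (Hex : ex_finite_lim_seq x).
  { apply ex_lim_seq_cauchy_corr. intros [eps He].
    destruct (ex_pow_half_lt C (eps / 2) ltac:(lra)) as [N HN].
    exists N. intros n m Hn Hm. simpl.
    assert (HN' : forall k, (N <= k)%nat -> Rabs (x k - x N) <= C * (/2) ^ N).
    { intros k Hk. replace k with (N + (k - N))%nat by lia. apply Hc. }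
    pose proof (HN' n Hn). pose proof (HN' m Hm).
    replace (x n - x m) with ((x n - x N) - (x m - x N)) by ring.
    eapply Rle_lt_trans; [apply Rabs_triang|]. rewrite Rabs_Ropp. lra. }
  pose proof (Lim_seq_correct' x Hex) as Hl. apply is_lim_seq_Reals in Hl.
  intros n. apply le_epsilon. intros eps He.
  destruct (Hl eps He) as [N HN]. specialize (HN (n + N)%nat ltac:(lia)).
  unfold Rdist in HN. pose proof (Hc n N).
  replace (x n - real (Lim_seq x))
    with (- (x (n + N)%nat - x n) + (x (n + N)%nat - real (Lim_seq x))) by ring.
  eapply Rle_trans; [apply Rabs_triang|]. rewrite Rabs_Ropp. lra.
Qed.

(** * The angle variables *)

Lemma Rabs_mult_minus_le (a b a' b' A B : R) : Rabs a <= A -> Rabs b' <= B ->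
  Rabs (a * b - a' * b') <= A * Rabs (b - b') + B * Rabs (a - a').
Proof.
  intros HA HB.
  replace (a * b - a' * b') with (a * (b - b') + b' * (a - a')) by ring.
  eapply Rle_trans; [apply Rabs_triang|]. rewrite !Rabs_mult.
  apply Rplus_le_compat; apply Rmult_le_compat_r; auto; apply Rabs_pos.
Qed.

Lemma sqr_le_of_Rabs_le (z c : R) : 0 <= c -> Rabs z <= c -> z ^ 2 <= c ^ 2.
Proof.
  intros Hc H. rewrite <- (Rabs_pos_eq (z ^ 2)), <- RPow_abs by apply pow2_ge_0.
  apply pow_incr. split; [apply Rabs_pos|exact H].
Qed.

(* The cosine of the inclination angle and [slope w = u'], in terms of its sine [w]. *)
Definition cosine (w : R) : R := sqrt (1 - w ^ 2).
Definition slope (w : R) : R := w / cosine w.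

Lemma cosine_0 : cosine 0 = 1.
Proof. unfold cosine. replace (1 - 0 ^ 2) with 1 by ring. apply sqrt_1. Qed.

Lemma cosine_sqr (w : R) : Rabs w <= 1 -> cosine w ^ 2 = 1 - w ^ 2.
Proof.
  intros H. unfold cosine. rewrite pow2_sqrt; auto.
  pose proof (sqr_le_of_Rabs_le w 1 ltac:(lra) H). lra.
Qed.

Lemma cosine_bounds (w : R) : Rabs w <= 1/2 -> 3/4 <= cosine w <= 1.
Proof.
  intros H. pose proof (sqr_le_of_Rabs_le w (1/2) ltac:(lra) H). unfold cosine. split.
  - rewrite <- (sqrt_pow2 (3/4)) by lra. apply sqrt_le_1_alt. simpl in *. lra.
  - rewrite <- sqrt_1 at 2. apply sqrt_le_1_alt. pose proof (pow2_ge_0 w). lra.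
Qed.

Lemma cosine_lipschitz (w w' : R) : Rabs w <= 1/2 -> Rabs w' <= 1/2 ->
  Rabs (cosine w - cosine w') <= Rabs (w - w').
Proof.
  intros H H'. destruct (cosine_bounds w H). destruct (cosine_bounds w' H').
  assert (E : Rabs (cosine w - cosine w') * (cosine w + cosine w')
              = Rabs (w - w') * Rabs (w + w')).
  { rewrite <- (Rabs_pos_eq (cosine w + cosine w')) by lra.
    rewrite <- !Rabs_mult, <- Rabs_Ropp. f_equal.
    replace ((cosine w - cosine w') * (cosine w + cosine w'))
      with (cosine w ^ 2 - cosine w' ^ 2) by ring.
    rewrite !cosine_sqr by lra. ring. }
  assert (Rabs (w + w') <= 1) by (eapply Rle_trans; [apply Rabs_triang|lra]).
  pose proof (Rabs_pos (w - w')). pose proof (Rabs_pos (cosine w - cosine w')).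
  nra.
Qed.

Lemma continuity_pt_cosine (w : R -> R) (x : R) :
  continuity_pt w x -> Rabs (w x) <= 1/2 -> continuity_pt (fun y => cosine (w y)) x.
Proof.
  intros Hc Hb. pose proof (sqr_le_of_Rabs_le (w x) (1/2) ltac:(lra) Hb).
  apply cont_sqrt; [|lra]. apply cont_minus; [apply cont_const|apply cont_pow, Hc].
Qed.

Lemma slope_0 : slope 0 = 0.
Proof. unfold slope. rewrite cosine_0. field. Qed.

Lemma slope_bound (w : R) : Rabs w <= 1/2 -> Rabs (slope w) <= 1.
Proof.
  intros H. destruct (cosine_bounds w H). unfold slope, Rdiv.
  rewrite Rabs_mult, Rabs_inv, (Rabs_pos_eq (cosine w)) by lra.
  apply Rmult_le_reg_r with (cosine w); [lra|].
  rewrite Rmult_assoc, Rinv_l by lra. lra.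
Qed.

Lemma slope_lipschitz (w w' : R) : Rabs w <= 1/2 -> Rabs w' <= 1/2 ->
  Rabs (slope w - slope w') <= 3 * Rabs (w - w').
Proof.
  intros H H'. destruct (cosine_bounds w H). destruct (cosine_bounds w' H').
  unfold slope.
  replace (w / cosine w - w' / cosine w')
    with ((w * cosine w' - w' * cosine w) / (cosine w * cosine w')) by (field; lra).
  unfold Rdiv. rewrite Rabs_mult, Rabs_inv, (Rabs_pos_eq (cosine w * cosine w')) by nra.
  pose proof (Rabs_mult_minus_le w (cosine w') w' (cosine w) (1/2) 1 H
                ltac:(rewrite Rabs_pos_eq; lra)).
  pose proof (cosine_lipschitz w' w H' H). rewrite (Rabs_minus_sym w' w) in H5.
  assert (Hd : / (cosine w * cosine w') <= 2).
  { replace 2 with (/ (1/2)) by field. apply Rinv_le_contravar; nra. }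
  pose proof (Rabs_pos (w * cosine w' - w' * cosine w)).
  assert (0 <= / (cosine w * cosine w')) by (left; apply Rinv_0_lt_compat; nra).
  nra.
Qed.

Lemma continuity_pt_slope (w : R -> R) (x : R) :
  continuity_pt w x -> Rabs (w x) <= 1/2 -> continuity_pt (fun y => slope (w y)) x.
Proof.
  intros Hc Hb. destruct (cosine_bounds _ Hb).
  apply cont_div; [exact Hc|apply continuity_pt_cosine; auto|lra].
Qed.

Lemma is_derive_slope (w : R) : Rabs w <= 1/2 -> is_derive slope w (/ cosine w ^ 3).
Proof.
  intros H. destruct (cosine_bounds w H). pose proof (cosine_sqr w ltac:(lra)) as E.
  pose proof (sqr_le_of_Rabs_le w (1/2) ltac:(lra) H).
  unfold slope, cosine in *. auto_derive.
  - replace (1 + - (w * (w * 1))) with (1 - w ^ 2) by ring. repeat split; lra.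
  - replace (1 + - (w * (w * 1))) with (1 - w ^ 2) by ring.
    set (c := sqrt (1 - w ^ 2)) in *.
    field_simplify; [|lra|lra]. rewrite E. field. lra.
Qed.

Lemma sqrt_1_plus_slope_sqr (w : R) : Rabs w <= 1/2 -> sqrt (1 + slope w ^ 2) = / cosine w.
Proof.
  intros H. destruct (cosine_bounds w H). pose proof (cosine_sqr w ltac:(lra)) as E.
  replace (1 + slope w ^ 2) with ((/ cosine w) ^ 2).
  - apply sqrt_pow2. left; apply Rinv_0_lt_compat; lra.
  - unfold slope. field_simplify; [|lra|lra]. rewrite E. f_equal. ring.
Qed.

Lemma slope_div_sqrt (w : R) : Rabs w <= 1/2 -> slope w / sqrt (1 + slope w ^ 2) = w.
Proof.
  intros H. destruct (cosine_bounds w H). rewrite sqrt_1_plus_slope_sqr by exact H.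
  unfold slope. field. lra.
Qed.

(** * The right-hand side *)

(* [<nu, p> / |p|^2] at the point [p = (s, u)] of the profile, whose unit
   normal is [nu = (- w, cosine w)]. *)
Definition support_ratio (s u w : R) : R := (u * cosine w - s * w) / (s ^ 2 + u ^ 2).

Lemma rhs_slope (a r u w : R) : Rabs w <= 1/2 -> 0 < u ->
  rhs a r u (slope w) = r * (a * support_ratio r u w).
Proof.
  intros Hw Hu. destruct (cosine_bounds w Hw).
  assert (0 < r ^ 2 + u ^ 2) by (pose proof (pow2_ge_0 r); pose proof (pow_lt u 2 Hu); lra).
  unfold rhs, support_ratio. rewrite sqrt_1_plus_slope_sqr by exact Hw.
  unfold slope. field. lra.
Qed.

Definition ratio_bound (c : R) : R := 12 / c.
Definition ratio_lip (c : R) : R := 196 / c ^ 2 + 12 / c.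

Section SupportRatio.
Variable c : R.
Hypothesis Hc : 0 < c.

Definition in_box (s u w : R) : Prop := 0 <= s <= c / 4 /\ c / 2 <= u <= 2 * c /\ Rabs w <= 1/2.

Lemma ratio_bound_pos : 0 < ratio_bound c.
Proof. unfold ratio_bound. apply Rdiv_lt_0_compat; lra. Qed.

Lemma ratio_lip_pos : 0 < ratio_lip c.
Proof.
  unfold ratio_lip. assert (0 < c ^ 2) by (apply pow_lt; lra).
  apply Rplus_lt_0_compat; apply Rdiv_lt_0_compat; lra.
Qed.

Lemma numerator_bound (s u w : R) : in_box s u w -> Rabs (u * cosine w - s * w) <= 3 * c.
Proof.
  intros [Hs [Hu Hw]]. destruct (cosine_bounds w Hw).
  eapply Rle_trans; [apply Rabs_triang|]. rewrite Rabs_Ropp, !Rabs_mult.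
  rewrite (Rabs_pos_eq u), (Rabs_pos_eq s), (Rabs_pos_eq (cosine w)) by lra.
  pose proof (Rabs_pos w). nra.
Qed.

Lemma numerator_lipschitz (s u w u' w' d : R) : in_box s u w -> in_box s u' w' ->
  Rabs (u - u') <= d -> Rabs (w - w') <= d ->
  Rabs ((u * cosine w - s * w) - (u' * cosine w' - s * w')) <= (3 * c + 1) * d.
Proof.
  intros [Hs [Hu Hw]] [_ [Hu' Hw']] Hdu Hdw.
  destruct (cosine_bounds w Hw). destruct (cosine_bounds w' Hw').
  replace ((u * cosine w - s * w) - (u' * cosine w' - s * w'))
    with ((u * cosine w - u' * cosine w') - s * (w - w')) by ring.
  eapply Rle_trans; [apply Rabs_triang|].
  rewrite Rabs_Ropp, Rabs_mult, (Rabs_pos_eq s) by lra.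
  pose proof (Rabs_mult_minus_le u (cosine w) u' (cosine w') (2 * c) 1
                ltac:(rewrite Rabs_pos_eq; lra) ltac:(rewrite Rabs_pos_eq; lra)).
  pose proof (cosine_lipschitz w w' Hw Hw').
  pose proof (Rabs_pos (w - w')). pose proof (Rabs_pos (u - u')). nra.
Qed.

Lemma inv_norm_bound (s u : R) : 0 <= s -> c / 2 <= u -> 0 < / (s ^ 2 + u ^ 2) <= 4 / c ^ 2.
Proof.
  intros Hs Hu. assert (c ^ 2 / 4 <= s ^ 2 + u ^ 2) by nra.
  split; [apply Rinv_0_lt_compat; nra|].
  replace (4 / c ^ 2) with (/ (c ^ 2 / 4)) by (field; lra).
  apply Rinv_le_contravar; nra.
Qed.

Lemma inv_norm_lipschitz (s u u' d : R) : 0 <= s -> c / 2 <= u <= 2 * c -> c / 2 <= u' <= 2 * c ->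
  Rabs (u - u') <= d -> Rabs (/ (s ^ 2 + u ^ 2) - / (s ^ 2 + u' ^ 2)) <= 64 / c ^ 3 * d.
Proof.
  intros Hs Hu Hu' Hd.
  assert (D1 : c ^ 2 / 4 <= s ^ 2 + u ^ 2) by nra.
  assert (D2 : c ^ 2 / 4 <= s ^ 2 + u' ^ 2) by nra.
  assert (P0 : 0 < c ^ 2 / 4) by nra.
  replace (/ (s ^ 2 + u ^ 2) - / (s ^ 2 + u' ^ 2))
    with ((u' - u) * (u' + u) / ((s ^ 2 + u ^ 2) * (s ^ 2 + u' ^ 2)))
    by (field; split; apply Rgt_not_eq; lra).
  unfold Rdiv. rewrite !Rabs_mult, (Rabs_pos_eq (u' + u)) by lra.
  rewrite (Rabs_pos_eq (/ _)) by (left; apply Rinv_0_lt_compat; nra).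
  assert (Hi : / ((s ^ 2 + u ^ 2) * (s ^ 2 + u' ^ 2)) <= / (c ^ 2 / 4 * (c ^ 2 / 4))).
  { apply Rinv_le_contravar; [nra|]. apply Rmult_le_compat; nra. }
  rewrite Rabs_minus_sym in Hd.
  assert (Rabs (u' - u) * (u' + u) <= d * (4 * c))
    by (apply Rmult_le_compat; try lra; apply Rabs_pos).
  assert (0 <= / ((s ^ 2 + u ^ 2) * (s ^ 2 + u' ^ 2))) by (left; apply Rinv_0_lt_compat; nra).
  apply Rle_trans with (d * (4 * c) * / (c ^ 2 / 4 * (c ^ 2 / 4))).
  - apply Rmult_le_compat; try nra. apply Rmult_le_pos; [apply Rabs_pos|lra].
  - right. field. lra.
Qed.

Lemma support_ratio_bound (s u w : R) : in_box s u w -> Rabs (support_ratio s u w) <= ratio_bound c.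
Proof.
  intros HB. pose proof (numerator_bound s u w HB). destruct HB as [Hs [Hu Hw]].
  destruct (inv_norm_bound s u) as [Q1 Q2]; try lra.
  unfold support_ratio, Rdiv. rewrite Rabs_mult, (Rabs_pos_eq (/ _)) by lra.
  replace (ratio_bound c) with (3 * c * (4 / c ^ 2)) by (unfold ratio_bound; field; lra).
  apply Rmult_le_compat; auto; try lra. apply Rabs_pos.
Qed.

Lemma support_ratio_lipschitz (s u w u' w' d : R) : in_box s u w -> in_box s u' w' ->
  Rabs (u - u') <= d -> Rabs (w - w') <= d ->
  Rabs (support_ratio s u w - support_ratio s u' w') <= ratio_lip c * d.
Proof.
  intros HB HB' Hdu Hdw.
  pose proof (numerator_lipschitz s u w u' w' d HB HB' Hdu Hdw).
  pose proof (numerator_bound s u w HB).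
  destruct HB as [Hs [Hu Hw]]. destruct HB' as [_ [Hu' Hw']].
  pose proof (inv_norm_lipschitz s u u' d ltac:(lra) Hu Hu' Hdu).
  destruct (inv_norm_bound s u') as [Q1 Q2]; try lra.
  pose proof (Rabs_mult_minus_le (u * cosine w - s * w) (/ (s ^ 2 + u ^ 2))
     (u' * cosine w' - s * w') (/ (s ^ 2 + u' ^ 2)) (3 * c) (4 / c ^ 2) H0
     ltac:(rewrite Rabs_pos_eq; lra)).
  assert (0 <= d) by (pose proof (Rabs_pos (u - u')); lra).
  assert (0 < 4 / c ^ 2) by (apply Rdiv_lt_0_compat; [lra|apply pow_lt; lra]).
  unfold support_ratio, Rdiv. eapply Rle_trans; [exact H2|].
  replace (ratio_lip c * d) with (3 * c * (64 / c ^ 3 * d) + 4 / c ^ 2 * ((3 * c + 1) * d))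
    by (unfold ratio_lip; field; lra).
  apply Rplus_le_compat; apply Rmult_le_compat_l; lra.
Qed.

End SupportRatio.

Lemma continuity_pt_support_ratio (u w : R -> R) (x : R) :
  continuity_pt u x -> continuity_pt w x -> Rabs (w x) <= 1/2 -> 0 < u x ->
  continuity_pt (fun s => support_ratio s (u s) (w s)) x.
Proof.
  intros Hu Hw Hb Hp. unfold support_ratio. apply cont_div.
  - apply cont_minus; apply cont_mult; auto using continuity_pt_cosine, continuity_pt_id.
  - apply cont_plus; apply cont_pow; auto using continuity_pt_id.
  - pose proof (pow2_ge_0 x). assert (0 < u x ^ 2) by (apply pow_lt; auto). lra.
Qed.

(** * Contractions on pairs of functions *)

Definition fpair : Type := ((R -> R) * (R -> R))%type.

Definition close (d : R) (p q : fpair) : Prop :=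
  forall r, Rabs (fst p r - fst q r) <= d /\ Rabs (snd p r - snd q r) <= d.

Lemma close_nonneg (d : R) (p q : fpair) : close d p q -> 0 <= d.
Proof. intros H. destruct (H 0) as [H1 _]. pose proof (Rabs_pos (fst p 0 - fst q 0)). lra. Qed.

Lemma close_le (d d' : R) (p q : fpair) : d <= d' -> close d p q -> close d' p q.
Proof. intros Hd H r. destruct (H r). split; lra. Qed.

Lemma close_sym (d : R) (p q : fpair) : close d p q -> close d q p.
Proof. intros H r. rewrite !(Rabs_minus_sym (_ q r)). apply H. Qed.

Lemma close_trans (d1 d2 : R) (p q s : fpair) :
  close d1 p q -> close d2 q s -> close (d1 + d2) p s.
Proof.
  intros H1 H2 r. destruct (H1 r) as [A1 B1]. destruct (H2 r) as [A2 B2].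
  split.
  - replace (fst p r - fst s r) with ((fst p r - fst q r) + (fst q r - fst s r)) by ring.
    eapply Rle_trans; [apply Rabs_triang|lra].
  - replace (snd p r - snd s r) with ((snd p r - snd q r) + (snd q r - snd s r)) by ring.
    eapply Rle_trans; [apply Rabs_triang|lra].
Qed.

Lemma close_of_pow_half_bound (e K : R) (p q : fpair) :
  (forall n, close (e + K * (/2) ^ n) p q) -> close e p q.
Proof.
  intros H r. split.
  - assert (Rabs (fst p r - fst q r) - e <= 0); [|lra].
    apply (Rle_0_of_pow_half_bound _ K). intros n. destruct (H n r). lra.
  - assert (Rabs (snd p r - snd q r) - e <= 0); [|lra].
    apply (Rle_0_of_pow_half_bound _ K). intros n. destruct (H n r). lra.
Qed.

Lemma close_0_eq (p q : fpair) (r : R) : close 0 p q -> fst p r = fst q r /\ snd p r = snd q r.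
Proof.
  intros H. destruct (H r) as [H1 H2].
  pose proof (Rabs_pos (fst p r - fst q r)). pose proof (Rabs_pos (snd p r - snd q r)).
  split; apply Rminus_diag_uniq, Rabs_eq_0; lra.
Qed.

Section Contraction.
Variables (P : fpair -> Prop) (T : fpair -> fpair).
Hypothesis T_stable : forall p, P p -> P (T p).
Hypothesis T_contraction : forall p q d, P p -> P q -> close d p q -> close (d / 2) (T p) (T q).

Lemma close_fixed_points (T' : fpair -> fpair) (p q : fpair) (e B : R) :
  P p -> P q -> close 0 p (T p) -> close 0 q (T' q) ->
  close e (T q) (T' q) -> close B p q -> close (2 * e) p q.
Proof.
  intros Pp Pq Fp Fq HT HB. pose proof (close_nonneg _ _ _ HT) as He.
  apply (close_of_pow_half_bound _ B). intros n. induction n as [|n IH].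
  - apply (close_le B); [simpl; lra|exact HB].
  - pose proof (T_contraction p q _ Pp Pq IH) as Hc.
    pose proof (close_trans _ _ _ _ _ (close_trans _ _ _ _ _ Fp Hc) HT) as H.
    pose proof (close_trans _ _ _ _ _ H (close_sym _ _ _ Fq)) as H'.
    refine (close_le _ _ _ _ _ H'); simpl; lra.
Qed.

Variables (p0 : fpair) (D : R).
Hypotheses (P_p0 : P p0) (step_p0 : close D p0 (T p0)).

Definition iterate (n : nat) : fpair := Nat.iter n T p0.

Definition limit_pair : fpair :=
  (fun r => real (Lim_seq (fun n => fst (iterate n) r)),
   fun r => real (Lim_seq (fun n => snd (iterate n) r))).

Lemma iterate_stable (n : nat) : P (iterate n).
Proof. induction n as [|n IH]; [exact P_p0|apply T_stable, IH]. Qed.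

Lemma iterate_step (n : nat) : close (D * (/2) ^ n) (iterate n) (iterate (S n)).
Proof.
  induction n as [|n IH].
  - apply (close_le D); [simpl; lra|exact step_p0].
  - replace (D * (/2) ^ S n) with (D * (/2) ^ n / 2) by (simpl; field).
    apply T_contraction; auto using iterate_stable.
Qed.

Lemma iterate_cauchy (n m : nat) :
  close (2 * D * (/2) ^ n - 2 * D * (/2) ^ (n + m)) (iterate n) (iterate (n + m)).
Proof.
  induction m as [|m IH].
  - rewrite Nat.add_0_r. intros r. rewrite !Rminus_diag, Rabs_R0. lra.
  - rewrite Nat.add_succ_r.
    refine (close_le _ _ _ _ _ (close_trans _ _ _ _ _ IH (iterate_step (n + m)))).
    simpl; lra.
Qed.

Lemma iterate_limit (n : nat) : close (2 * D * (/2) ^ n) (iterate n) limit_pair.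
Proof.
  pose proof (close_nonneg _ _ _ step_p0) as HD.
  assert (Hc : forall k m, close (2 * D * (/2) ^ k) (iterate k) (iterate (k + m))).
  { intros k m. refine (close_le _ _ _ _ _ (iterate_cauchy k m)).
    pose proof (pow_le (/2) (k + m) ltac:(lra)). nra. }
  intros r. split.
  - apply (Lim_seq_pow_half_err (fun k => fst (iterate k) r)). intros k m.
    rewrite Rabs_minus_sym. apply (Hc k m r).
  - apply (Lim_seq_pow_half_err (fun k => snd (iterate k) r)). intros k m.
    rewrite Rabs_minus_sym. apply (Hc k m r).
Qed.

Hypothesis P_closed : forall (x : nat -> fpair) (p : fpair) (K : R),
  (forall n, P (x n)) -> (forall n, close (K * (/2) ^ n) (x n) p) -> P p.

Lemma limit_stable : P limit_pair.
Proof. apply (P_closed iterate _ (2 * D)); [exact iterate_stable|exact iterate_limit]. Qed.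

Lemma limit_fixed : close 0 limit_pair (T limit_pair).
Proof.
  apply (close_of_pow_half_bound _ (2 * D)). intros n.
  pose proof (T_contraction _ _ _ (iterate_stable n) limit_stable (iterate_limit n)) as Hc.
  pose proof (close_trans _ _ _ _ _ (close_sym _ _ _ (iterate_limit (S n))) Hc) as H.
  refine (close_le _ _ _ _ _ H); simpl; lra.
Qed.

End Contraction.

(** * The Picard map *)

Definition clamp (Rp r : R) : R := Rmax 0 (Rmin Rp r).

Lemma clamp_range (Rp r : R) : 0 <= Rp -> 0 <= clamp Rp r <= Rp.
Proof. intros. unfold clamp, Rmax, Rmin. repeat destruct Rle_dec; lra. Qed.

Lemma clamp_id (Rp r : R) : 0 <= r <= Rp -> clamp Rp r = r.
Proof. intros. unfold clamp, Rmax, Rmin. repeat destruct Rle_dec; lra. Qed.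

Lemma clamp_lipschitz (Rp x y : R) : 0 <= Rp -> Rabs (clamp Rp x - clamp Rp y) <= Rabs (x - y).
Proof.
  intros. unfold clamp, Rmax, Rmin.
  repeat destruct Rle_dec; unfold Rabs; repeat destruct Rcase_abs; lra.
Qed.

Lemma continuity_pt_clamp (Rp x : R) : 0 <= Rp -> continuity_pt (clamp Rp) x.
Proof.
  intros H. apply continuity_pt_eps. intros eps He. exists eps; split; auto.
  intros y Hy. eapply Rle_lt_trans; [apply clamp_lipschitz; auto|exact Hy].
Qed.

(* [(r w)' = r * forcing a u w r] is the profile equation in the sine variable. *)
Definition forcing (a : R) (u w : R -> R) (s : R) : R := a * support_ratio s (u s) (w s).

(* The integral equations [u r = u0 + int_0^r slope (w s) ds] and
   [w r = 1/r int_0^r s forcing(s) ds], evaluated at [clamp Rp r] so that the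
   iterates are continuous on all of R; at [r = 0] the junk value [/ 0 = 0]
   yields the correct [w 0 = 0]. *)
Definition picard_u (Rp u0 : R) (w : R -> R) (r : R) : R :=
  u0 + RInt (fun s => slope (w s)) 0 (clamp Rp r).

Definition picard_w (Rp a : R) (u w : R -> R) (r : R) : R :=
  / clamp Rp r * RInt (fun s => s * forcing a u w s) 0 (clamp Rp r).

Definition picard (Rp a u0 : R) (p : fpair) : fpair :=
  (picard_u Rp u0 (snd p), picard_w Rp a (fst p) (snd p)).

Definition admissible (c : R) (p : fpair) : Prop := forall r,
  (c / 2 <= fst p r <= 2 * c /\ Rabs (snd p r) <= 1/2) /\
  continuity_pt (fst p) r /\ continuity_pt (snd p) r.

Definition admissible_params (c A a u0 : R) : Prop := Rabs a <= A /\ Rabs (u0 - c) <= c / 4.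

Section Admissible.
Variable c : R.
Hypothesis Hc : 0 < c.

Lemma continuity_pt_slope_snd (p : fpair) (s : R) :
  admissible c p -> continuity_pt (fun s => slope (snd p s)) s.
Proof. intros Hp. destruct (Hp s) as [[_ Hw] [_ Cw]]. apply continuity_pt_slope; auto. Qed.

Lemma continuity_pt_forcing (a : R) (p : fpair) (s : R) :
  admissible c p -> continuity_pt (forcing a (fst p) (snd p)) s.
Proof.
  intros Hp. destruct (Hp s) as [[Hu Hw] [Cu Cw]].
  apply cont_mult; [apply cont_const|apply continuity_pt_support_ratio; auto; lra].
Qed.

Lemma continuity_pt_moment (a : R) (p : fpair) (s : R) :
  admissible c p -> continuity_pt (fun s => s * forcing a (fst p) (snd p) s) s.
Proof. intros Hp. apply cont_mult; [apply continuity_pt_id|apply continuity_pt_forcing, Hp]. Qed.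

Lemma admissible_close (p q : fpair) : admissible c p -> admissible c q -> close (2 * c + 1) p q.
Proof.
  intros Hp Hq r. destruct (Hp r) as [[U1 W1] _]. destruct (Hq r) as [[U2 W2] _].
  split.
  - unfold Rabs; destruct Rcase_abs; lra.
  - eapply Rle_trans; [apply Rabs_triang|]. rewrite Rabs_Ropp. lra.
Qed.

Lemma admissible_closed (x : nat -> fpair) (p : fpair) (K : R) :
  (forall n, admissible c (x n)) -> (forall n, close (K * (/2) ^ n) (x n) p) -> admissible c p.
Proof.
  intros Hx Hclose r. split; [split|split].
  - apply (between_of_pow_half_approx (fun n => fst (x n) r) _ _ _ K);
      [intros n; apply (Hx n r)|intros n; apply (Hclose n r)].
  - apply Rabs_le, (between_of_pow_half_approx (fun n => snd (x n) r) _ _ _ K);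
      [|intros n; apply (Hclose n r)].
    intros n. destruct (Hx n r) as [[_ H] _]. unfold Rabs in H; destruct Rcase_abs in H; lra.
  - apply (continuity_pt_uniform_limit (fun n => fst (x n)) _ K);
      [intros n; apply (Hx n r)|intros n y; apply (Hclose n y)].
  - apply (continuity_pt_uniform_limit (fun n => snd (x n)) _ K);
      [intros n; apply (Hx n r)|intros n y; apply (Hclose n y)].
Qed.

End Admissible.

Section Picard.
Variables (c A Rp : R).
Hypotheses (Hc : 0 < c) (HA : 0 <= A) (HRp : 0 < Rp) (HRc : Rp <= c / 4).

Lemma admissible_in_box (p : fpair) (s : R) :
  admissible c p -> 0 <= s <= Rp -> in_box c s (fst p s) (snd p s).
Proof. intros Hp Hs. destruct (Hp s) as [[H1 H2] _]. repeat split; auto; lra. Qed.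

Lemma moment_bound (a : R) (p : fpair) (s b : R) : Rabs a <= A -> admissible c p ->
  0 <= s <= b -> b <= Rp -> Rabs (s * forcing a (fst p) (snd p) s) <= b * (A * ratio_bound c).
Proof.
  intros Ha Hp Hs Hb. unfold forcing.
  rewrite !Rabs_mult, (Rabs_pos_eq s) by lra.
  apply Rmult_le_compat; try lra; [apply Rmult_le_pos; apply Rabs_pos|].
  apply Rmult_le_compat; auto; try apply Rabs_pos.
  apply support_ratio_bound; [exact Hc|apply admissible_in_box; auto; lra].
Qed.

Lemma picard_u_bound (u0 : R) (p : fpair) (r : R) :
  admissible c p -> Rabs (picard_u Rp u0 (snd p) r - u0) <= clamp Rp r.
Proof.
  intros Hp. unfold picard_u. destruct (clamp_range Rp r) as [C1 C2]; [lra|].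
  rewrite (Rplus_comm u0), Rplus_minus_r.
  apply Rle_trans with (clamp Rp r * 1); [|lra].
  apply abs_RInt_0_le; auto.
  - intros s. apply (continuity_pt_slope_snd c), Hp.
  - intros s _. apply slope_bound. apply (Hp s).
Qed.

Lemma picard_w_bound (a : R) (p : fpair) (r : R) : Rabs a <= A -> admissible c p ->
  Rabs (picard_w Rp a (fst p) (snd p) r) <= clamp Rp r * (A * ratio_bound c).
Proof.
  intros Ha Hp. unfold picard_w. destruct (clamp_range Rp r) as [C1 C2]; [lra|].
  apply abs_average_le; auto.
  - intros s. apply (continuity_pt_moment c Hc), Hp.
  - intros s Hs. apply moment_bound; auto.
Qed.

Lemma continuity_pt_picard_u (u0 : R) (p : fpair) (r : R) :
  admissible c p -> continuity_pt (picard_u Rp u0 (snd p)) r.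
Proof.
  intros Hp. apply cont_plus; [apply cont_const|].
  apply (continuity_pt_comp (clamp Rp) (fun y => RInt (fun s => slope (snd p s)) 0 y)).
  - apply continuity_pt_clamp; lra.
  - apply continuity_pt_RInt_0. intros s. apply (continuity_pt_slope_snd c), Hp.
Qed.

Lemma continuity_pt_picard_w (a : R) (p : fpair) (r : R) : Rabs a <= A -> admissible c p ->
  continuity_pt (picard_w Rp a (fst p) (snd p)) r.
Proof.
  intros Ha Hp. destruct (Req_dec (clamp Rp r) 0) as [E|E].
  - (* near a point clamped to 0 the average is bounded by [clamp Rp y <= Rabs (y - r)] *)
    apply continuity_pt_eps. intros eps He.
    pose proof (Rmult_le_pos _ _ HA (Rlt_le _ _ (ratio_bound_pos c Hc))) as HM.
    exists (eps / (A * ratio_bound c + 1)). split; [apply Rdiv_lt_0_compat; lra|].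
    intros y Hy. unfold picard_w at 2. rewrite E, Rinv_0, Rmult_0_l, Rminus_0_r.
    eapply Rle_lt_trans; [apply picard_w_bound; auto|].
    pose proof (clamp_lipschitz Rp y r ltac:(lra)) as L. rewrite E, Rminus_0_r in L.
    destruct (clamp_range Rp y) as [C1 C2]; [lra|]. rewrite Rabs_pos_eq in L by lra.
    apply Rle_lt_trans with (clamp Rp y * (A * ratio_bound c + 1)); [nra|].
    apply Rlt_le_trans with (eps / (A * ratio_bound c + 1) * (A * ratio_bound c + 1));
      [apply Rmult_lt_compat_r; lra|].
    right; field; lra.
  - apply cont_mult.
    + apply (cont_inv (clamp Rp) r); auto. apply continuity_pt_clamp; lra.
    + apply (continuity_pt_comp (clamp Rp)
               (fun y => RInt (fun s => s * forcing a (fst p) (snd p) s) 0 y)).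
      * apply continuity_pt_clamp; lra.
      * apply continuity_pt_RInt_0. intros s. apply (continuity_pt_moment c Hc), Hp.
Qed.

Hypothesis small_bound : Rp * (A * ratio_bound c) <= 1/2.

Lemma picard_admissible (a u0 : R) (p : fpair) :
  admissible_params c A a u0 -> admissible c p -> admissible c (picard Rp a u0 p).
Proof.
  intros [Ha Hu0] Hp r. destruct (clamp_range Rp r) as [C1 C2]; [lra|].
  split; [split|split]; simpl.
  - pose proof (picard_u_bound u0 p r Hp).
    unfold Rabs in *; repeat destruct Rcase_abs; lra.
  - eapply Rle_trans; [apply picard_w_bound; auto|].
    pose proof (Rmult_le_pos _ _ HA (Rlt_le _ _ (ratio_bound_pos c Hc))).
    apply Rle_trans with (Rp * (A * ratio_bound c)); [apply Rmult_le_compat_r|]; lra.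
  - apply continuity_pt_picard_u, Hp.
  - apply continuity_pt_picard_w; auto.
Qed.

Hypothesis small_lip : Rp * (3 + A * ratio_lip c) <= 1/2.

Lemma picard_contraction (a u0 : R) (p q : fpair) (d : R) :
  admissible_params c A a u0 -> admissible c p -> admissible c q ->
  close d p q -> close (d / 2) (picard Rp a u0 p) (picard Rp a u0 q).
Proof.
  intros [Ha Hu0] Hp Hq Hd r. destruct (clamp_range Rp r) as [C1 C2]; [lra|].
  pose proof (close_nonneg _ _ _ Hd) as Hd0.
  pose proof (Rmult_le_pos _ _ HA (Rlt_le _ _ (ratio_lip_pos c Hc))) as HL.
  simpl. split.
  - unfold picard_u.
    replace (u0 + _ - (u0 + _)) with
      (RInt (fun s => slope (snd p s)) 0 (clamp Rp r)
       - RInt (fun s => slope (snd q s)) 0 (clamp Rp r))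
      by ring.
    rewrite <- RInt_minus_cont by (intros s; apply (continuity_pt_slope_snd c); auto).
    eapply Rle_trans.
    + apply (abs_RInt_0_le _ (fun s => cont_minus _ _ s
               (continuity_pt_slope_snd c p s Hp) (continuity_pt_slope_snd c q s Hq)) _ (3 * d) C1).
      intros s _. eapply Rle_trans; [apply slope_lipschitz; [apply (Hp s)|apply (Hq s)]|].
      apply Rmult_le_compat_l; [lra|apply (Hd s)].
    + apply Rle_trans with (Rp * (3 * d)); [apply Rmult_le_compat_r; lra|]. nra.
  - unfold picard_w. rewrite <- Rmult_minus_distr_l.
    rewrite <- RInt_minus_cont by (intros s; apply (continuity_pt_moment c Hc); auto).
    eapply Rle_trans.
    + apply (abs_average_le _ (fun s => cont_minus _ _ s
               (continuity_pt_moment c Hc a p s Hp) (continuity_pt_moment c Hc a q s Hq))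
               _ (Rp * (A * ratio_lip c * d)) C1).
      intros s Hs. unfold forcing.
      rewrite <- Rmult_minus_distr_l, <- Rmult_minus_distr_l, !Rabs_mult, (Rabs_pos_eq s) by lra.
      rewrite Rmult_assoc. apply Rmult_le_compat; try lra; [apply Rmult_le_pos; apply Rabs_pos|].
      apply Rmult_le_compat; auto; try apply Rabs_pos.
      apply support_ratio_lipschitz; auto; try (apply admissible_in_box; auto; lra); apply (Hd s).
    + nra.
Qed.

Lemma picard_param_close (a u0 a' u0' : R) (p : fpair) : admissible c p ->
  close (Rabs (u0 - u0') + Rp * (Rabs (a - a') * ratio_bound c))
    (picard Rp a u0 p) (picard Rp a' u0' p).
Proof.
  intros Hp r. destruct (clamp_range Rp r) as [C1 C2]; [lra|].
  pose proof (Rabs_pos (u0 - u0')). pose proof (Rabs_pos (a - a')).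
  pose proof (ratio_bound_pos c Hc).
  assert (0 <= Rp * (Rabs (a - a') * ratio_bound c)) by (apply Rmult_le_pos; [lra|nra]).
  simpl. split.
  - unfold picard_u. replace (u0 + _ - (u0' + _)) with (u0 - u0') by ring. lra.
  - unfold picard_w. rewrite <- Rmult_minus_distr_l.
    rewrite <- RInt_minus_cont by (intros s; apply (continuity_pt_moment c Hc); auto).
    apply Rle_trans with (Rp * (Rabs (a - a') * ratio_bound c)); [|lra].
    apply abs_average_le; auto.
    + intros s. apply cont_minus; apply (continuity_pt_moment c Hc); auto.
    + intros s Hs. unfold forcing.
      rewrite <- Rmult_minus_distr_l, <- Rmult_minus_distr_r, Rabs_mult, Rabs_mult,
        (Rabs_pos_eq s) by lra.
      apply Rmult_le_compat; try lra; [apply Rmult_le_pos; apply Rabs_pos|].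
      apply Rmult_le_compat_l; [apply Rabs_pos|].
      apply support_ratio_bound; [exact Hc|apply admissible_in_box; auto; lra].
Qed.

End Picard.

(** * Regularity of fixed points *)

(* The derivative of [w y = / y * int_0^y s forcing(s) ds]; its value for
   [y <= 0] is the limit [forcing 0 / 2] at [0+]. *)
Definition sine_deriv (a : R) (u w : R -> R) (y : R) : R :=
  if Rle_dec y 0 then forcing a u w 0 / 2
  else forcing a u w y - RInt (fun s => s * forcing a u w s) 0 y / y ^ 2.

Definition slope_deriv (a : R) (u w : R -> R) (y : R) : R :=
  sine_deriv a u w y / cosine (w y) ^ 3.

Section Regularity.
Variables (c Rp a u0 : R) (u w : R -> R).
Hypotheses (Hc : 0 < c) (HRp : 0 < Rp)
  (adm : admissible c (u, w)) (fixed : close 0 (u, w) (picard Rp a u0 (u, w))).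

Let F (y : R) : R := RInt (fun s => s * forcing a u w s) 0 y.

Let forcing_cont (s : R) : continuity_pt (forcing a u w) s :=
  continuity_pt_forcing c Hc a (u, w) s adm.

Let moment_cont (s : R) : continuity_pt (fun s => s * forcing a u w s) s :=
  continuity_pt_moment c Hc a (u, w) s adm.

Let w_bound (s : R) : Rabs (w s) <= 1/2 := proj2 (proj1 (adm s)).

Let cosine_w_pos (y : R) : 0 < cosine (w y).
Proof. destruct (cosine_bounds _ (w_bound y)). lra. Qed.

Let inv_cosine_pow_cont (n : nat) (x : R) : continuity_pt (fun y => / cosine (w y) ^ n) x.
Proof.
  apply cont_inv; [apply cont_pow, continuity_pt_cosine; [apply (adm x)|apply w_bound]|].
  apply pow_nonzero. pose proof (cosine_w_pos x). lra.
Qed.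

Lemma fixed_u_eq (y : R) : 0 <= y <= Rp -> u y = u0 + RInt (fun s => slope (w s)) 0 y.
Proof.
  intros Hy. destruct (close_0_eq _ _ y fixed) as [E _]. simpl in E.
  rewrite E. unfold picard_u. rewrite clamp_id; auto.
Qed.

Lemma fixed_w_eq (y : R) : 0 <= y <= Rp -> w y = / y * F y.
Proof.
  intros Hy. destruct (close_0_eq _ _ y fixed) as [_ E]. simpl in E.
  rewrite E. unfold picard_w. rewrite clamp_id; auto.
Qed.

Lemma fixed_u_0 : u 0 = u0.
Proof. rewrite fixed_u_eq by lra. rewrite RInt_point. unfold zero; simpl. ring. Qed.

Lemma fixed_w_0 : w 0 = 0.
Proof. rewrite fixed_w_eq by lra. rewrite Rinv_0. ring. Qed.

Lemma sine_deriv_pos (x : R) : 0 < x -> sine_deriv a u w x = forcing a u w x - F x / x ^ 2.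
Proof. intros Hx. unfold sine_deriv. destruct (Rle_dec x 0); [lra|reflexivity]. Qed.

Lemma is_derive_sine (x : R) : 0 < x -> is_derive (fun y => / y * F y) x (sine_deriv a u w x).
Proof.
  intros Hx. rewrite sine_deriv_pos by exact Hx.
  replace (forcing a u w x) with (x * forcing a u w x / x) by (field; lra).
  apply is_derive_average; [exact moment_cont|lra].
Qed.

Lemma continuity_pt_sine_deriv (x : R) : 0 < x -> continuity_pt (sine_deriv a u w) x.
Proof.
  intros Hx. apply (continuity_pt_locally_ext (fun y => forcing a u w y - F y / y ^ 2) _ x);
    [exact Hx| |].
  - intros y Hy. unfold Rdist in Hy. apply Rabs_def2 in Hy. rewrite sine_deriv_pos; auto; lra.
  - apply cont_minus; [apply forcing_cont|].
    apply cont_div; [apply continuity_pt_RInt_0, moment_cont|apply cont_pow, continuity_pt_id|].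
    apply pow_nonzero. lra.
Qed.

Lemma sine_quotient_lim_0 :
  filterlim (fun y => (w y - w 0) / (y - 0))
    (within (fun y => (0 <= y <= Rp) /\ y <> 0) (locally 0)) (locally (sine_deriv a u w 0)).
Proof.
  apply filterlim_within_eps. intros eps He.
  destruct (RInt_moment_quotient _ forcing_cont (eps / 2) ltac:(lra)) as [d [Hd H]].
  exists (Rmin d Rp). split; [apply Rmin_pos; lra|].
  intros y [Dy Hy0] Hyd. rewrite Rminus_0_r, Rabs_pos_eq in Hyd by lra.
  pose proof (Rmin_l d Rp). pose proof (Rmin_r d Rp).
  unfold sine_deriv. destruct (Rle_dec 0 0) as [_|]; [|lra].
  rewrite fixed_w_0, fixed_w_eq by lra.
  replace ((/ y * F y - 0) / (y - 0)) with (F y / y ^ 2) by (field; lra).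
  eapply Rle_lt_trans; [apply H; lra|lra].
Qed.

Lemma sine_deriv_lim_0 :
  filterlim (sine_deriv a u w) (within (fun y => 0 <= y <= Rp) (locally 0))
    (locally (sine_deriv a u w 0)).
Proof.
  apply filterlim_within_eps. intros eps He.
  destruct (RInt_moment_quotient _ forcing_cont (eps / 4) ltac:(lra)) as [d [Hd H]].
  destruct (proj1 (continuity_pt_eps _ 0) (forcing_cont 0) (eps / 2) ltac:(lra)) as [d' [Hd' H']].
  exists (Rmin d d'). split; [apply Rmin_pos; lra|].
  intros y Dy Hyd. pose proof (Rmin_l d d'). pose proof (Rmin_r d d').
  unfold sine_deriv at 2. destruct (Rle_dec 0 0) as [_|]; [|lra].
  destruct (Req_dec y 0) as [->|Hy0].
  - unfold sine_deriv. destruct (Rle_dec 0 0) as [_|]; [|lra]. rewrite Rminus_diag, Rabs_R0. lra.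
  - rewrite sine_deriv_pos by lra. rewrite Rminus_0_r, Rabs_pos_eq in Hyd by lra.
    specialize (H y ltac:(lra)). specialize (H' y ltac:(rewrite Rminus_0_r, Rabs_pos_eq; lra)).
    change (RInt (fun s => s * forcing a u w s) 0 y) with (F y) in H.
    replace (forcing a u w y - F y / y ^ 2 - forcing a u w 0 / 2)
      with ((forcing a u w y - forcing a u w 0) - (F y / y ^ 2 - forcing a u w 0 / 2))
      by (field; exact Hy0).
    eapply Rle_lt_trans; [apply Rabs_triang|]. rewrite Rabs_Ropp. lra.
Qed.

Lemma fixed_u_deriv : has_deriv_on_closed 0 Rp u (fun y => slope (w y)).
Proof.
  intros x Hx.
  pose proof (is_derive_plus (fun _ => u0) _ x _ _ (is_derive_const u0 x)
    (is_derive_RInt_0 _ (fun s => continuity_pt_slope_snd c (u, w) s adm) x)) as D.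
  unfold plus, zero in D; simpl in D. rewrite Rplus_0_l in D.
  eapply filterlim_within_ext; [|exact (is_derive_within (fun y => 0 <= y <= Rp) _ _ _ D)].
  intros y [Hy _]. simpl. rewrite (fixed_u_eq y), (fixed_u_eq x); auto.
Qed.

Lemma fixed_slope_deriv : has_deriv_on_closed 0 Rp (fun y => slope (w y)) (slope_deriv a u w).
Proof.
  intros x Hx. destruct (Req_dec x 0) as [->|Hx0].
  - (* at [0], [slope (w y) / y = (w y / y) * / cosine (w y)] *)
    pose proof (filterlim_within_mult _ _ _ _ _ _ sine_quotient_lim_0
      (continuity_pt_within (fun y => (0 <= y <= Rp) /\ y <> 0) _ 0 (inv_cosine_pow_cont 1 0)))
      as L.
    replace (slope_deriv a u w 0) with (sine_deriv a u w 0 * / cosine (w 0) ^ 1)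
      by (unfold slope_deriv; rewrite fixed_w_0, cosine_0; field).
    eapply filterlim_within_ext; [|exact L].
    intros y [_ Hy]. simpl. rewrite fixed_w_0, slope_0. unfold slope.
    pose proof (cosine_w_pos y). field. lra.
  - assert (E : forall y, 0 <= y <= Rp -> w y = / y * F y) by exact fixed_w_eq.
    assert (D : is_derive (fun y => slope (/ y * F y)) x (slope_deriv a u w x)).
    { assert (Hs : is_derive slope (/ x * F x) (/ cosine (w x) ^ 3))
        by (rewrite <- (E x Hx); apply is_derive_slope, w_bound).
      exact (is_derive_comp slope (fun y => / y * F y) x _ _ Hs (is_derive_sine x ltac:(lra))). }
    eapply filterlim_within_ext; [|exact (is_derive_within (fun y => 0 <= y <= Rp) _ _ _ D)].
    intros y [Hy _]. simpl. rewrite (E y Hy), (E x Hx). reflexivity.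
Qed.

Lemma fixed_slope_deriv_cont : continuous_on_closed 0 Rp (slope_deriv a u w).
Proof.
  intros x Hx. unfold slope_deriv, Rdiv. destruct (Req_dec x 0) as [->|Hx0].
  - exact (filterlim_within_mult _ _ _ _ _ _ sine_deriv_lim_0
             (continuity_pt_within _ _ 0 (inv_cosine_pow_cont 3 0))).
  - apply (continuity_pt_within _ (fun y => sine_deriv a u w y * / cosine (w y) ^ 3)), cont_mult;
      [apply continuity_pt_sine_deriv; lra|apply inv_cosine_pow_cont].
Qed.

Lemma fixed_solves_ode : solves_ode a Rp u (fun y => slope (w y)).
Proof.
  intros r Hr. destruct (adm r) as [[Hu Hw] _]. simpl in Hu, Hw.
  rewrite rhs_slope by (auto; lra). change (a * support_ratio r (u r) (w r)) with (forcing a u w r).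
  apply (is_derive_ext_loc F); [|exact (is_derive_RInt_0 _ moment_cont r)].
  apply (filter_imp (fun y => 0 <= y <= Rp)); [|apply locally_interior; exact Hr].
  intros y Hy. unfold Rdiv. rewrite Rmult_assoc.
  change (slope (w y) * / sqrt (1 + slope (w y) ^ 2))
    with (slope (w y) / sqrt (1 + slope (w y) ^ 2)).
  rewrite slope_div_sqrt by apply w_bound. rewrite fixed_w_eq by exact Hy.
  destruct (Req_dec y 0) as [->|Hy0].
  - rewrite Rmult_0_l. exact (RInt_point 0 _).
  - rewrite <- Rmult_assoc, Rinv_r, Rmult_1_l by exact Hy0. reflexivity.
Qed.

End Regularity.

(** * The solution and its dependence on the parameters *)

Lemma jointly_continuous_on_of_lipschitz (P : R -> R -> Prop) (Rr K : R) (V : R -> R -> R -> R) :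
  0 < K -> (forall a c, P a c -> forall r, continuity_pt (V a c) r) ->
  (forall a c a' c' r, P a c -> P a' c' ->
     Rabs (V a' c' r - V a c r) <= K * (Rabs (c' - c) + Rabs (a' - a))) ->
  jointly_continuous_on P Rr V.
Proof.
  intros HK Hcont Hlip a c r Pac _ eps He.
  destruct (proj1 (continuity_pt_eps _ r) (Hcont a c Pac r) (eps / 2) ltac:(lra)) as [d [Hd H]].
  exists (Rmin d (eps / (4 * K))).
  split; [apply Rmin_pos; [lra|apply Rdiv_lt_0_compat; lra]|].
  intros a' c' r' Pac' _ Ha Hc Hr.
  pose proof (Rmin_l d (eps / (4 * K))). pose proof (Rmin_r d (eps / (4 * K))).
  specialize (H r' ltac:(lra)). specialize (Hlip a c a' c' r' Pac Pac').
  assert (K * (Rabs (c' - c) + Rabs (a' - a)) < eps / 2).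
  { apply Rlt_le_trans with (K * (eps / (4 * K) + eps / (4 * K))).
    - apply Rmult_lt_compat_l; lra.
    - right; field; lra. }
  replace (V a' c' r' - V a c r) with ((V a' c' r' - V a c r') + (V a c r' - V a c r)) by ring.
  eapply Rle_lt_trans; [apply Rabs_triang|]. lra.
Qed.

Section Solution.
Variables (c A Rp : R).
Hypotheses (Hc : 0 < c) (HA : 0 <= A) (HRp : 0 < Rp) (HRc : Rp <= c / 4)
  (small_bound : Rp * (A * ratio_bound c) <= 1/2) (small_lip : Rp * (3 + A * ratio_lip c) <= 1/2).

Definition solution (a u0 : R) : fpair := limit_pair (picard Rp a u0) (fun _ => u0, fun _ => 0).

Lemma constant_admissible (a u0 : R) :
  admissible_params c A a u0 -> admissible c (fun _ => u0, fun _ => 0).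
Proof.
  intros [_ Hu0] r. simpl. rewrite Rabs_R0.
  repeat split; try apply cont_const; unfold Rabs in Hu0; destruct Rcase_abs in Hu0; lra.
Qed.

Section FixedParams.
Variables (a u0 : R).
Hypothesis params : admissible_params c A a u0.

Let T_stable := fun p => picard_admissible c A Rp Hc HA HRp HRc small_bound a u0 p params.
Let T_contraction :=
  fun p q d => picard_contraction c A Rp Hc HA HRp HRc small_lip a u0 p q d params.
Let p0_adm := constant_admissible a u0 params.
Let p0_step := admissible_close c Hc _ _ p0_adm (T_stable _ p0_adm).

Lemma solution_admissible : admissible c (solution a u0).
Proof.
  exact (limit_stable _ _ T_stable T_contraction _ _ p0_adm p0_step (admissible_closed c)).
Qed.

Lemma solution_fixed : close 0 (solution a u0) (picard Rp a u0 (solution a u0)).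
Proof.
  exact (limit_fixed _ _ T_stable T_contraction _ _ p0_adm p0_step (admissible_closed c)).
Qed.

End FixedParams.

Lemma solution_param_close (a u0 a' u0' : R) :
  admissible_params c A a u0 -> admissible_params c A a' u0' ->
  close (2 * (1 + Rp * ratio_bound c) * (Rabs (u0 - u0') + Rabs (a - a')))
    (solution a u0) (solution a' u0').
Proof.
  intros H H'.
  pose proof (solution_admissible a u0 H) as S. pose proof (solution_admissible a' u0' H') as S'.
  pose proof (close_fixed_points _ _
    (fun p q d => picard_contraction c A Rp Hc HA HRp HRc small_lip a u0 p q d H)
    (picard Rp a' u0') _ _ _ _ S S' (solution_fixed a u0 H) (solution_fixed a' u0' H')
    (picard_param_close c Rp Hc HRp HRc a u0 a' u0' _ S') (admissible_close c Hc _ _ S S')) as E.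
  refine (close_le _ _ _ _ _ E).
  pose proof (Rabs_pos (u0 - u0')). pose proof (Rabs_pos (a - a')).
  pose proof (ratio_bound_pos c Hc).
  assert (0 <= Rp * ratio_bound c * Rabs (u0 - u0')) by (apply Rmult_le_pos; [nra|lra]).
  nra.
Qed.

Lemma solution_solves_ivp (a u0 : R) : admissible_params c A a u0 ->
  C2_on 0 Rp (fst (solution a u0)) (fun r => slope (snd (solution a u0) r))
    (slope_deriv a (fst (solution a u0)) (snd (solution a u0))) /\
  solves_ode a Rp (fst (solution a u0)) (fun r => slope (snd (solution a u0) r)) /\
  fst (solution a u0) 0 = u0 /\ slope (snd (solution a u0) 0) = 0.
Proof.
  intros H. pose proof (solution_admissible a u0 H) as S. pose proof (solution_fixed a u0 H) as F.
  destruct (solution a u0) as [u w]. simpl.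
  split; [|split; [|split]].
  - split; [|split].
    + exact (fixed_u_deriv c Rp a u0 u w S F).
    + exact (fixed_slope_deriv c Rp a u0 u w Hc HRp S F).
    + exact (fixed_slope_deriv_cont c Rp a u w Hc S).
  - exact (fixed_solves_ode c Rp a u0 u w Hc S F).
  - exact (fixed_u_0 Rp a u0 u w HRp F).
  - rewrite (fixed_w_0 Rp a u0 u w HRp F). exact slope_0.
Qed.

Lemma solution_jointly_continuous (P : R -> R -> Prop) :
  (forall a u0, P a u0 -> admissible_params c A a u0) ->
  jointly_continuous_on P Rp (fun a u0 => fst (solution a u0)) /\
  jointly_continuous_on P Rp (fun a u0 r => slope (snd (solution a u0) r)).
Proof.
  intros HP. pose proof (ratio_bound_pos c Hc) as Hrb.
  assert (HK : 0 < 2 * (1 + Rp * ratio_bound c)) by nra.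
  split.
  - apply (jointly_continuous_on_of_lipschitz _ _ _ _ HK).
    + intros a u0 H r. apply (solution_admissible a u0 (HP _ _ H) r).
    + intros a u0 a' u0' r H H'.
      apply (solution_param_close a' u0' a u0 (HP _ _ H') (HP _ _ H) r).
  - apply (jointly_continuous_on_of_lipschitz _ _ _ _ (Rmult_lt_0_compat 3 _ ltac:(lra) HK)).
    + intros a u0 H r. apply (continuity_pt_slope_snd c), (solution_admissible a u0 (HP _ _ H)).
    + intros a u0 a' u0' r H H'.
      pose proof (solution_admissible a u0 (HP _ _ H) r) as [[_ B] _].
      pose proof (solution_admissible a' u0' (HP _ _ H') r) as [[_ B'] _].
      eapply Rle_trans; [apply (slope_lipschitz _ _ B' B)|].
      rewrite Rmult_assoc. apply Rmult_le_compat_l; [lra|].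
      apply (solution_param_close a' u0' a u0 (HP _ _ H') (HP _ _ H) r).
Qed.

End Solution.

Lemma ex_small_radius (c A : R) : 0 < c -> 0 <= A -> exists Rp,
  0 < Rp /\ Rp <= c / 4 /\
  Rp * (A * ratio_bound c) <= 1/2 /\ Rp * (3 + A * ratio_lip c) <= 1/2.
Proof.
  intros Hc HA. pose proof (ratio_bound_pos c Hc). pose proof (ratio_lip_pos c Hc).
  set (K := A * ratio_bound c + 3 + A * ratio_lip c).
  assert (HK : 0 < K) by (unfold K; nra).
  set (Rp := Rmin (c / 4) (/ (2 * K))).
  assert (HRp : 0 < Rp) by (apply Rmin_pos; [lra|apply Rinv_0_lt_compat; lra]).
  assert (HRK : Rp * K <= 1/2).
  { apply Rle_trans with (/ (2 * K) * K); [apply Rmult_le_compat_r; [lra|apply Rmin_r]|].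
    right; field; lra. }
  exists Rp. split; [exact HRp|split; [apply Rmin_l|split]].
  - apply Rle_trans with (Rp * K); [apply Rmult_le_compat_l; unfold K; nra|exact HRK].
  - apply Rle_trans with (Rp * K); [apply Rmult_le_compat_l; unfold K; nra|exact HRK].
Qed.

Lemma admissible_params_near (alpha0 c a u0 : R) : 0 < c ->
  Rabs (a - alpha0) < Rmin 1 (c / 4) -> Rabs (u0 - c) < Rmin 1 (c / 4) ->
  admissible_params c (Rabs alpha0 + 1) a u0.
Proof.
  intros Hc Ha Hu. pose proof (Rmin_l 1 (c / 4)). pose proof (Rmin_r 1 (c / 4)). split.
  - pose proof (Rabs_triang (a - alpha0) alpha0).
    replace (a - alpha0 + alpha0) with a in * by ring. lra.
  - lra.
Qed.

Theorem mainTheorem9 :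
  forall alpha0 u00 : R, 0 < u00 ->
  exists (Rr delta : R) (U U1 U2 : R -> R -> R -> R),
    0 < Rr /\ 0 < delta /\
    (forall alpha u0, Rabs (alpha - alpha0) < delta -> Rabs (u0 - u00) < delta ->
       0 < u0 /\
       C2_on 0 Rr (U alpha u0) (U1 alpha u0) (U2 alpha u0) /\
       solves_ode alpha Rr (U alpha u0) (U1 alpha u0) /\
       U alpha u0 0 = u0 /\ U1 alpha u0 0 = 0) /\
    jointly_continuous_on
      (fun alpha u0 => Rabs (alpha - alpha0) < delta /\ Rabs (u0 - u00) < delta)
      Rr U /\
    jointly_continuous_on
      (fun alpha u0 => Rabs (alpha - alpha0) < delta /\ Rabs (u0 - u00) < delta)
      Rr U1.
Proof.
  intros alpha0 u00 Hu.
  set (A := Rabs alpha0 + 1).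
  assert (HA : 0 <= A) by (unfold A; pose proof (Rabs_pos alpha0); lra).
  destruct (ex_small_radius u00 A Hu HA) as [Rp [HRp [HRc [Hb Hl]]]].
  set (delta := Rmin 1 (u00 / 4)).
  set (near := fun a u0 => Rabs (a - alpha0) < delta /\ Rabs (u0 - u00) < delta).
  assert (Hnear : forall a u0, near a u0 -> admissible_params u00 A a u0)
    by (intros a u0 [Ha Hu0]; exact (admissible_params_near alpha0 u00 a u0 Hu Ha Hu0)).
  destruct (solution_jointly_continuous u00 A Rp Hu HA HRp HRc Hb Hl near Hnear) as [CU CU1].
  exists Rp, delta, (fun a u0 => fst (solution Rp a u0)),
    (fun a u0 r => slope (snd (solution Rp a u0) r)),
    (fun a u0 => slope_deriv a (fst (solution Rp a u0)) (snd (solution Rp a u0))).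
  split; [exact HRp|split; [apply Rmin_pos; lra|split; [|split; [exact CU|exact CU1]]]].
  intros a u0 Ha Hu0.
  pose proof (Hnear a u0 (conj Ha Hu0)) as [_ Hu0'].
  split; [unfold Rabs in Hu0'; destruct Rcase_abs in Hu0'; lra|].
  exact (solution_solves_ivp u00 A Rp Hu HA HRp HRc Hb Hl a u0 (Hnear a u0 (conj Ha Hu0))).
Qed.
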